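(* Let $E$ be a finite-dimensional complex Hilbert space, $e\in E$ a unit vector, $\tau\in(0,1)$, $\rho:=1-\tau$, and let $T_0\in B(E)_+$ be strictly positive. Define $$T_{n+1}:=T_n^{1/2}\bigl(I_E-\tau|e\rangle\langle e|\bigr)T_n^{1/2}\qquad(n\ge0).$$ Then each $T_n$ is strictly positive and $$T_{n+1}^{-1}=T_n^{-1}+\frac{\tau}{\rho}\,|T_n^{-1/2}e\rangle\langle T_n^{-1/2}e|.$$ Setting $\beta_n:=\langle e,T_n^{-1}e\rangle$ and $s_n:=\mathrm{tr}(T_n^{-1})$, one has $$\beta_{n+1}-\beta_n=\frac{\tau}{\rho}|\langle e,T_n^{-1/2}e\rangle|^2,\qquad s_{n+1}-s_n=\frac{\tau}{\rho}\beta_n.$$ In particular, for all $n\ge0$, $$\beta_n\ge\beta_0+n\frac{\tau}{\rho\|T_0\|},\qquad s_n\ge s_0+\frac{\tau}{\rho}n\beta_0+\frac{\tau^2}{2\rho^2\|T_0\|}n(n-1).$$ Consequently there is a constant $C>0$ depending only on $T_0$ and $\tau$ such that $$\lambda_{\min}(T_n)\le\frac{\dim E}{s_n}\le\frac{C}{n^2}\qquad(n\ge1).$$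
   Context: For vectors $x,y$, $|x\rangle\langle y|$ denotes the operator $z\mapsto\langle y,z\rangle x$. $B(E)_+$ denotes positive operators; $T^{1/2}$, $T^{-1/2}$ are the positive square root and its inverse. $\lambda_{\min}(T)$ is the smallest eigenvalue of $T$. *)

From HB Require Import structures.
From mathcomp Require Import all_boot all_order all_algebra.
From mathcomp Require Import complex.
From mathcomp Require Import boolp classical_sets reals.

Set Implicit Arguments.
Unset Strict Implicit.
Unset Printing Implicit Defensive.

Import Order.TTheory GRing.Theory Num.Theory.
Local Open Scope ring_scope.

Section Defs.
Variable R : realType.
Local Notation C := R[i].
Variable d : nat.
Local Notation vec := 'cV[C]_d.
Local Notation op := 'M[C]_d.

Definition adjmx m n (A : 'M[C]_(m, n)) : 'M[C]_(n, m) := (map_mx (@conjc R) A)^T.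

(* <x, y>, conjugate-linear in the first argument, linear in the second *)
Definition inner (x y : vec) : C := (adjmx x *m y) 0 0.

Definition vnorm (x : vec) : R := Num.sqrt (complex.Re (inner x x)).

Definition ketbra (x y : vec) : op := x *m adjmx y.

Definition psdmx (A : op) : Prop :=
  adjmx A = A /\ forall x : vec, 0 <= inner x (A *m x).
Definition pdmx (A : op) : Prop :=
  adjmx A = A /\ forall x : vec, x != 0 -> 0 < inner x (A *m x).

Definition psd_sqrt (A : op) : op :=
  xget 0 [set S : op | psdmx S /\ S *m S = A].

Definition opnorm (A : op) : R :=
  sup [set r : R | exists x : vec, vnorm x = 1 /\ r = vnorm (A *m x)].

(* smallest eigenvalue (of a self-adjoint operator, whose eigenvalues are real) *)
Definition lambda_min (A : op) : R :=
  inf [set r : R | eigenvalue A (real_complex R r)].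

Fixpoint Tseq (tau : R) (e : vec) (T0 : op) (n : nat) : op :=
  match n with
  | 0 => T0
  | n'.+1 => let S := psd_sqrt (Tseq tau e T0 n') in
             S *m (1%:M - real_complex R tau *: ketbra e e) *m S
  end.

End Defs.

From HB Require Import structures.
From mathcomp Require Import all_boot all_order all_algebra.
From mathcomp Require Import complex.
From mathcomp Require Import boolp classical_sets reals.
From mathcomp Require Import spectral sesquilinear.
From mathcomp Require Import ring lra.

(* Write T_n = S^2 with S := T_n^{1/2} and E := |e><e|, so that
   T_{n+1} = S (I - tau E) S.  As E is a projection, (I - tau E)^{-1} =
   I + (tau/rho) E, which gives the rank-one update of the inverse and, taking
   <e, . e> and traces, the two recurrences.  The step only shrinks the form
   <x, T x>, so <e, T_n e> <= ||T_0||, while Cauchy-Schwarz for the form of S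
   gives |<e, S^{-1} e>|^2 <e, T_n e> >= 1: hence beta_n grows at least
   linearly and s_n at least quadratically.  Finally s_n = sum_j 1/lambda_j(T_n)
   is at most dim E / lambda_min(T_n). *)

Import Order.TTheory GRing.Theory Num.Theory.
Local Open Scope ring_scope.

Set Implicit Arguments.
Unset Strict Implicit.
Unset Printing Implicit Defensive.

Lemma mulmx1_invmx (F : comUnitRingType) n (A B : 'M[F]_n) :
  A *m B = 1%:M -> invmx A = B.
Proof.
by move=> AB; have [uA _] := mulmx1_unit AB; rewrite -[LHS]mulmx1 -AB mulKmx.
Qed.

Lemma invmxM (F : comUnitRingType) n (A B : 'M[F]_n) :
  A \in unitmx -> B \in unitmx -> invmx (A *m B) = invmx B *m invmx A.
Proof.
by move=> uA uB; apply: mulmx1_invmx; rewrite -mulmxA (mulKVmx uB) mulmxV.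
Qed.

Lemma cV_neq0_dim_gt0 (V : nmodType) n (x : 'cV[V]_n) : x != 0 -> (0 < n)%N.
Proof. by case: n x => // x; rewrite flatmx0 eqxx. Qed.

Section Adjoint.
Variable R : realType.
Local Notation C := R[i].
(* [ring_scope] is reopened last so that [x^*] is [Num.conj], which is [conjc]
   (the conjugation in [adjmx]) up to conversion but has the library theory. *)
Local Open Scope complex_scope.
Local Open Scope ring_scope.

Lemma conjC_real (r : R) : (r%:C)^* = r%:C :> C.
Proof. exact: conjc_real. Qed.

Lemma adjmxK m n (A : 'M[C]_(m, n)) : adjmx (adjmx A) = A.
Proof. by apply/matrixP => i j; rewrite !mxE conjcK. Qed.

Lemma adjmxM m n p (A : 'M[C]_(m, n)) (B : 'M[C]_(n, p)) :
  adjmx (A *m B) = adjmx B *m adjmx A.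
Proof. by rewrite /adjmx map_mxM trmx_mul. Qed.

Lemma adjmxB m n (A B : 'M[C]_(m, n)) : adjmx (A - B) = adjmx A - adjmx B.
Proof. by rewrite /adjmx map_mxB linearB. Qed.

Lemma adjmxZ m n a (A : 'M[C]_(m, n)) : adjmx (a *: A) = a^* *: adjmx A.
Proof. by rewrite /adjmx map_mxZ linearZ. Qed.

Lemma adjmx1 n : adjmx (1%:M : 'M[C]_n) = 1%:M.
Proof. by rewrite /adjmx map_mx1 trmx1. Qed.

Lemma adjmx_inv n (A : 'M[C]_n) : adjmx (invmx A) = invmx (adjmx A).
Proof. by rewrite /adjmx map_invmx trmx_inv. Qed.

Lemma adjmx_diag n (v : 'rV[C]_n) : adjmx (diag_mx v) = diag_mx (map_mx Num.conj v).
Proof. by rewrite /adjmx map_diag_mx tr_diag_mx. Qed.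

Lemma adjmx_tr_conj m n (A : 'M[C]_(m, n)) : (A ^t Num.conj)%sesqui = adjmx A.
Proof. by apply/matrixP => i j; rewrite !mxE. Qed.

End Adjoint.

Section InnerProduct.
Variables (R : realType) (d : nat).
Local Notation C := R[i].
Local Notation vec := 'cV[C]_d.
Local Notation op := 'M[C]_d.
Local Open Scope complex_scope.
Local Open Scope ring_scope.
Implicit Types (x y z : vec) (A P : op).

Lemma innerE x y : inner x y = \sum_i (x i 0)^* * y i 0.
Proof. by rewrite /inner mxE; apply: eq_bigr => i _; rewrite !mxE. Qed.

Lemma inner_conj x y : (inner x y)^* = inner y x.
Proof.
rewrite !innerE rmorph_sum; apply: eq_bigr => i _.
by rewrite rmorphM /= conjCK mulrC.
Qed.

Lemma inner_adjmx x y A : inner x (A *m y) = inner (adjmx A *m x) y.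
Proof. by rewrite /inner adjmxM adjmxK mulmxA. Qed.

Lemma innerDl x y z : inner (x + y) z = inner x z + inner y z.
Proof. by rewrite /inner /adjmx map_mxD linearD mulmxDl mxE. Qed.

Lemma innerDr x y z : inner x (y + z) = inner x y + inner x z.
Proof. by rewrite /inner mulmxDr mxE. Qed.

Lemma innerBr x y z : inner x (y - z) = inner x y - inner x z.
Proof. by rewrite /inner mulmxBr [LHS]mxE [X in _ + X]mxE. Qed.

Lemma innerZl a x y : inner (a *: x) y = a^* * inner x y.
Proof. by rewrite /inner adjmxZ -scalemxAl mxE. Qed.

Lemma innerZr a x y : inner x (a *: y) = a * inner x y.
Proof. by rewrite /inner -scalemxAr mxE. Qed.

Lemma inner_ge0 x : 0 <= inner x x.
Proof. by rewrite innerE; apply: sumr_ge0 => i _; rewrite mulrC mul_conjC_ge0. Qed.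

Lemma inner_eq0 x : (inner x x == 0) = (x == 0).
Proof.
apply/idP/eqP => [|->]; last by rewrite /inner mulmx0 mxE.
rewrite innerE psumr_eq0 => [/allP x0|i _]; last by rewrite mulrC mul_conjC_ge0.
apply/matrixP => i j; rewrite ord1 mxE.
by have := x0 i (mem_index_enum _); rewrite mulrC -normCK sqrf_eq0 normr_eq0 => /eqP.
Qed.

Lemma inner_gt0 x : x != 0 -> 0 < inner x x.
Proof. by rewrite lt_def inner_ge0 inner_eq0 andbT. Qed.

Lemma ketbra_mulmx x y z : ketbra x y *m z = inner y z *: x.
Proof.
rewrite /ketbra -mulmxA; apply/matrixP => i j.
by rewrite !mxE big_ord1 !ord1 mulrC.
Qed.

Lemma adjmx_ketbra x y : adjmx (ketbra x y) = ketbra y x.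
Proof. by rewrite /ketbra adjmxM adjmxK. Qed.

Lemma inner_ketbra x y : inner x (ketbra y y *m x) = `|inner x y| ^+ 2.
Proof. by rewrite ketbra_mulmx innerZr normCK inner_conj mulrC. Qed.

Lemma mxtrace_ketbra x y : \tr (ketbra x y) = inner y x.
Proof. by rewrite /ketbra mxtrace_mulC /mxtrace big_ord1. Qed.

Lemma psdmx1 : psdmx (1%:M : op).
Proof. by split=> [|x]; rewrite ?adjmx1 ?mul1mx ?inner_ge0. Qed.

Lemma psd_cauchy_schwarz P x y : psdmx P ->
  `|inner x (P *m y)| ^+ 2 <= inner x (P *m x) * inner y (P *m y).
Proof.
move=> [adjP P_ge0].
set a := inner x (P *m x); set b := inner x (P *m y); set c := inner y (P *m y).
have yx : inner y (P *m x) = b^* by rewrite inner_conj inner_adjmx adjP.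
have a0 : 0 <= a := P_ge0 x.
have c0 : 0 <= c := P_ge0 y.
set B := b * b^*; have B0 : 0 <= B := mul_conjC_ge0 b.
have quad t : 0 <= t -> 0 <= a - 2 * t * B + t ^+ 2 * B * c.
  pose z := x + (- t * b^*) *: y; move=> t0; rewrite [leRHS](_ : _ = inner z (P *m z)) //.
  rewrite mulmxDr -scalemxAr !innerDl !innerDr !innerZl !innerZr yx.
  rewrite rmorphM rmorphN /= (conj_Creal (ger0_real t0)) conjCK.
  by rewrite /B -/a -/b -/c; ring.
rewrite normCK -/B; have [c_eq0|c_neq0] := eqVneq c 0.
  (* for c = 0 the quadratic is affine in t, which forces B = 0 *)
  rewrite c_eq0 mulr0; have [->//|B_neq0] := eqVneq B 0.
  have := quad ((a + 1) / (2 * B)) (divr_ge0 (addr_ge0 a0 ler01) (mulr_ge0 (ler0n _ 2) B0)).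
  have -> : a - 2 * ((a + 1) / (2 * B)) * B + ((a + 1) / (2 * B)) ^+ 2 * B * c = -1.
    by rewrite c_eq0; field.
  by rewrite oppr_ge0 ler10.
have c_gt0 : 0 < c by rewrite lt_def c_neq0.
have := quad c^-1; rewrite invr_ge0 => /(_ c0).
have -> : a - 2 * c^-1 * B + c^-1 ^+ 2 * B * c = a - B / c by field.
by rewrite subr_ge0 ler_pdivrMr.
Qed.

Lemma vnorm_sqr x : ((vnorm x) ^+ 2)%:C = inner x x.
Proof.
have x0 := inner_ge0 x.
by rewrite sqr_sqrtr ?RRe_real ?ger0_real // -ler0c RRe_real ?ger0_real.
Qed.

Lemma vnorm1 x : vnorm x = 1 -> inner x x = 1.
Proof. by rewrite -vnorm_sqr => ->; rewrite expr1n. Qed.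

End InnerProduct.

Arguments psdmx1 {R d}.

Section UnitaryDiagonal.
Variables (R : realType) (d : nat).
Local Notation C := R[i].
Local Notation vec := 'cV[C]_d.
Local Notation op := 'M[C]_d.
Local Open Scope ring_scope.
Implicit Types (x : vec) (f g : 'I_d -> C).

Variable P : op.
Hypotheses (PPadj : P *m adjmx P = 1%:M) (PadjP : adjmx P *m P = 1%:M).

Definition udiag f : op := adjmx P *m diag_mx (\row_j f j) *m P.

Lemma udiagM f g : udiag f *m udiag g = udiag (fun j => f j * g j).
Proof.
rewrite /udiag !mulmxA -(mulmxA _ P) PPadj mulmx1 -(mulmxA (adjmx P)) mulmx_diag.
by congr (_ *m diag_mx _ *m _); apply/rowP => j; rewrite !mxE.
Qed.

Lemma udiag1 : udiag (fun=> 1) = 1%:M.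
Proof.
rewrite /udiag (_ : \row_j _ = const_mx 1); last by apply/rowP => j; rewrite !mxE.
by rewrite diag_const_mx mulmx1 PadjP.
Qed.

Lemma udiag_inv f : (forall j, f j != 0) ->
  udiag f *m udiag (fun j => (f j)^-1) = 1%:M.
Proof.
by move=> f0; rewrite udiagM -udiag1; congr udiag; apply: funext => j; rewrite mulfV.
Qed.

Lemma adjmx_udiag f : adjmx (udiag f) = udiag (fun j => (f j)^*).
Proof.
rewrite /udiag !adjmxM adjmxK mulmxA adjmx_diag; congr (_ *m diag_mx _ *m _).
by apply/rowP => j; rewrite !mxE.
Qed.

Lemma udiag_ge0 f x : (forall j, 0 <= f j) -> 0 <= inner x (udiag f *m x).
Proof.
move=> f0; rewrite /udiag -!mulmxA inner_adjmx adjmxK innerE.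
apply: sumr_ge0 => i _; rewrite mul_diag_mx [X in _ * X]mxE mulrCA.
by apply: mulr_ge0; [rewrite mxE | rewrite mulrC mul_conjC_ge0].
Qed.

Lemma mxtrace_udiag f : \tr (udiag f) = \sum_j f j.
Proof.
rewrite /udiag mxtrace_mulC mulmxA PPadj mul1mx mxtrace_diag.
by apply: eq_bigr => j _; rewrite mxE.
Qed.

Lemma eigenvalue_udiag f j : eigenvalue (udiag f) (f j).
Proof.
apply/eigenvalueP; exists (delta_mx 0 j *m P).
  rewrite /udiag !mulmxA -(mulmxA _ P) PPadj mulmx1 scalemxAl; congr (_ *m _).
  apply/rowP => k; rewrite mul_mx_diag !mxE.
  by case: (k =P j) => [->|_]; rewrite ?mulr1 ?mul1r ?mulr0 ?mul0r.
apply: contraTneq isT => /(congr1 (mulmx^~ (adjmx P))).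
rewrite -mulmxA PPadj mulmx1 mul0mx => /rowP/(_ j).
by rewrite !mxE !eqxx /= => /eqP; rewrite oner_eq0.
Qed.

End UnitaryDiagonal.

Section PositiveDefinite.
Variables (R : realType) (d : nat).
Local Notation C := R[i].
Local Notation vec := 'cV[C]_d.
Local Notation op := 'M[C]_d.
Local Open Scope complex_scope.
Local Open Scope ring_scope.
Implicit Types (T S : op) (x : vec).

Lemma pd_eigenvalue_gt0 T a : pdmx T -> eigenvalue T a -> 0 < a.
Proof.
move=> [adjT T_gt0] /eigenvalueP [v vT v0].
have Tv : T *m adjmx v = a^* *: adjmx v by rewrite -{1}adjT -adjmxM vT adjmxZ.
have v'0 : adjmx v != 0.
  apply: contraNneq v0 => /(congr1 (@adjmx _ _ _)).
  by rewrite adjmxK => ->; rewrite /adjmx map_mx0 trmx0.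
have := T_gt0 _ v'0; rewrite Tv innerZr pmulr_lgt0 ?inner_gt0 // => a_gt0.
by rewrite -[a]conjCK conj_Creal // ger0_real // ltW.
Qed.

Lemma pd_spectral T : pdmx T -> exists P : op,
  [/\ P *m adjmx P = 1%:M, adjmx P *m P = 1%:M &
      exists2 lam : 'I_d -> C, (forall j, 0 < lam j) & T = udiag P lam].
Proof.
move=> pdT; have [adjT _] := pdT.
have /orthomx_spectralP : T \is normalmx by rewrite qualifE !adjmx_tr_conj adjT.
have /unitarymxP := spectral_unitarymx T; have := invmx_unitary (spectral_unitarymx T).
set P := spectralmx T; set sp := spectral_diag T; rewrite !adjmx_tr_conj => invP PP eT.
have PP' : adjmx P *m P = 1%:M by rewrite -invP mulVmx // spectral_unit.
have {}eT : T = udiag P (fun j => sp 0 j).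
  by rewrite eT invP /udiag; congr (_ *m diag_mx _ *m _); apply/rowP => j; rewrite mxE.
exists P; split => //; exists (fun j => sp 0 j) => // j.
by apply: pd_eigenvalue_gt0 pdT _; rewrite eT eigenvalue_udiag.
Qed.

Lemma pd_unitmx T : pdmx T -> T \in unitmx.
Proof.
move=> /pd_spectral [P [PP PP' [lam lam0 ->]]].
by have [] := mulmx1_unit (udiag_inv PP PP' (fun j => lt0r_neq0 (lam0 j))).
Qed.

Lemma psd_sqrtP T : pdmx T -> psdmx (psd_sqrt T) /\ psd_sqrt T *m psd_sqrt T = T.
Proof.
move=> pdT; apply: (@xgetPex _ 0 [set S : op | psdmx S /\ S *m S = T]).
have [P [PP PP' [lam lam0 eT]]] := pd_spectral pdT.
have sqrt0 j : 0 <= sqrtC (lam j) by rewrite sqrtC_ge0 ltW.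
exists (udiag P (fun j => sqrtC (lam j))); split; first split.
- by rewrite adjmx_udiag; congr udiag; apply: funext => j; rewrite conj_Creal ?ger0_real.
- by move=> x; apply: udiag_ge0.
- by rewrite udiagM // eT; congr udiag; apply: funext => j; rewrite -expr2 sqrtCK.
Qed.

Lemma psd_sqrt_unitmx T : pdmx T -> psd_sqrt T \in unitmx.
Proof.
move=> pdT; have [_ SST] := psd_sqrtP pdT.
by have := pd_unitmx pdT; rewrite -{1}SST unitmx_mul => /andP[].
Qed.

Lemma inner_invmx_psd_sqrt T x : pdmx T ->
  inner x (invmx T *m x) = inner (invmx (psd_sqrt T) *m x) (invmx (psd_sqrt T) *m x).
Proof.
move=> pdT; have [[adjS _] SST] := psd_sqrtP pdT; have uS := psd_sqrt_unitmx pdT.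
by rewrite -{1}SST invmxM // -mulmxA inner_adjmx adjmx_inv adjS.
Qed.

Lemma psd_inner_invmx_ge1 S x : psdmx S -> S \in unitmx -> inner x x = 1 ->
  1 <= `|inner x (invmx S *m x)| ^+ 2 * inner x (S *m S *m x).
Proof.
move=> psdS uS x1; have [adjS S_ge0] := psdS; set u := invmx S *m x.
have Su : S *m u = x by rewrite mulKVmx.
have ux_ge0 : 0 <= inner u x by rewrite -{1}Su S_ge0.
have cs1 := psd_cauchy_schwarz u x psdS.
rewrite [inner u (S *m x)]inner_adjmx adjS Su x1 normr1 expr1n in cs1.
have cs2 := psd_cauchy_schwarz x (S *m x) psdmx1.
rewrite !mul1mx x1 mul1r ger0_norm ?S_ge0 // in cs2.
rewrite -mulmxA [inner x (S *m _)]inner_adjmx adjS -inner_conj norm_conjC ger0_norm //.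
by apply: le_trans (exprn_ege1 2 cs1) _; rewrite exprMn ler_wpM2l ?exprn_ge0.
Qed.

Lemma trace_pd_invmx T : pdmx T -> exists2 lam : 'I_d -> C,
  (forall j, 0 < lam j /\ eigenvalue T (lam j)) & \tr (invmx T) = \sum_j (lam j)^-1.
Proof.
move=> /pd_spectral [P [PP PP' [lam lam0 ->]]]; exists lam.
  by move=> j; split; [exact: lam0 | exact: eigenvalue_udiag].
by rewrite (mulmx1_invmx (udiag_inv PP PP' (fun j => lt0r_neq0 (lam0 j)))) mxtrace_udiag.
Qed.

Lemma trace_pd_invmx_gt0 T : pdmx T -> (0 < d)%N -> 0 < \tr (invmx T).
Proof.
move=> /trace_pd_invmx [lam lamP ->] d0; rewrite (bigD1 (Ordinal d0)) //=.
rewrite ltr_pwDl ?invr_gt0 ?(proj1 (lamP _)) // sumr_ge0 // => j _.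
by rewrite invr_ge0 ltW // (proj1 (lamP _)).
Qed.

(* [lambda_min] is an [inf], which is junk unless the set of real eigenvalues
   is bounded below; positive definiteness provides the bound 0. *)
Lemma lambda_min_le_trace_invmx T : pdmx T -> (0 < d)%N ->
  (lambda_min T)%:C <= d%:R / \tr (invmx T).
Proof.
move=> pdT d0; have [lam lamP trE] := trace_pd_invmx pdT.
have lam_real j : lam j \is Num.real by rewrite ger0_real ?ltW ?(proj1 (lamP j)).
have [j0 _ lam_j0] := @real_arg_minP _ _ (Ordinal d0) xpredT lam isT (fun j _ => lam_real j).
have [lam0_gt0 eig0] := lamP j0.
have eigen_ge0 r : eigenvalue T r%:C -> 0 <= r.
  by move=> /(pd_eigenvalue_gt0 pdT); rewrite ltcR => /ltW.
apply: (@le_trans _ _ (lam j0)).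
  rewrite -(RRe_real (lam_real j0)) lecR; apply: ge_inf; first by exists 0 => r /eigen_ge0.
  by rewrite /= RRe_real.
rewrite ler_pdivlMr ?trace_pd_invmx_gt0 // trE mulr_sumr.
rewrite -[X in _ <= X%:R]card_ord -sumr_const; apply: ler_sum => j _.
by have [lam_gt0 _] := lamP j; rewrite ler_pdivrMr // mul1r lam_j0.
Qed.

End PositiveDefinite.

Section OperatorNorm.
Variables (R : realType) (d : nat).
Local Notation C := R[i].
Local Notation vec := 'cV[C]_d.
Local Notation op := 'M[C]_d.
Local Open Scope complex_scope.
Local Open Scope ring_scope.
Implicit Types (x : vec) (A : op).

Lemma norm_coord_le1 x i : inner x x = 1 -> `|x i 0| <= 1.
Proof.
move=> x1; rewrite -(expr_le1 (ltn0Sn 1)) // normCK mulrC -x1 innerE.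
by rewrite (bigD1 i) //= lerDl sumr_ge0 // => j _; rewrite mulrC mul_conjC_ge0.
Qed.

Lemma opnorm_has_ubound A :
  has_ubound [set r | exists x, vnorm x = 1 /\ r = vnorm (A *m x)].
Proof.
pose K := \sum_i (\sum_j `|A i j|) ^+ 2.
have K0 : 0 <= K by apply: sumr_ge0 => i _; apply/exprn_ge0/sumr_ge0.
exists (Num.sqrt (complex.Re K)) => _ [x [/vnorm1 x1 ->]].
have Re_mono (a b : C) : a <= b -> complex.Re a <= complex.Re b by rewrite lecE => /andP[].
rewrite ler_sqrt ?(Re_mono 0) //; apply: Re_mono; rewrite innerE; apply: ler_sum => i _.
rewrite mulrC -normCK lerXn2r ?nnegrE ?sumr_ge0 //.
rewrite mxE (le_trans (ler_norm_sum _ _ _)) // ler_sum // => j _.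
by rewrite normrM ler_piMr ?norm_coord_le1.
Qed.

Lemma inner_le_opnorm A x : adjmx A = A -> vnorm x = 1 ->
  inner x (A *m x) <= (opnorm A)%:C.
Proof.
move=> adjA x1; have xx := vnorm1 x1.
have real_xAx : inner x (A *m x) \is Num.real.
  by rewrite CrealE inner_conj [in X in _ == X]inner_adjmx adjA.
apply: le_trans (real_ler_norm real_xAx) _; apply: (@le_trans _ _ (vnorm (A *m x))%:C).
  have := psd_cauchy_schwarz x (A *m x) psdmx1.
  rewrite !mul1mx xx mul1r -vnorm_sqr rmorphXn /=.
  by rewrite ler_pXn2r // nnegrE ?normr_ge0 // ler0c /vnorm sqrtr_ge0.
by rewrite lecR; apply: ub_le_sup (opnorm_has_ubound A) _ _; exists x.
Qed.

Lemma opnorm_pd_gt0 A x : pdmx A -> vnorm x = 1 -> 0 < opnorm A.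
Proof.
move=> [adjA A_gt0] x1; have x0 : x != 0.
  by apply: contra_eqN (vnorm1 x1) => /eqP ->; rewrite /inner mulmx0 mxE eq_sym oner_eq0.
by rewrite -ltcR (lt_le_trans (A_gt0 _ x0) (inner_le_opnorm adjA x1)).
Qed.

End OperatorNorm.

Section ContractionStep.
Variables (R : realType) (d : nat).
Local Notation C := R[i].
Local Notation vec := 'cV[C]_d.
Local Notation op := 'M[C]_d.
Local Open Scope complex_scope.
Local Open Scope ring_scope.
Implicit Types (x : vec).

Variables (T S : op) (e : vec) (tau : R).
Hypotheses (pdT : pdmx T) (psdS : psdmx S) (SST : S *m S = T).
Hypotheses (e1 : inner e e = 1) (tau_gt0 : 0 < tau) (tau_lt1 : tau < 1).

Local Notation T' := (S *m (1%:M - tau%:C *: ketbra e e) *m S).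

Let adjS : adjmx S = S. Proof. by case: psdS. Qed.

Let S_unitmx : S \in unitmx.
Proof. by have := pd_unitmx pdT; rewrite -SST unitmx_mul => /andP[]. Qed.

Lemma inner_contraction x :
  inner x (T' *m x) = inner (S *m x) (S *m x) - tau%:C * `|inner e (S *m x)| ^+ 2.
Proof.
rewrite -!mulmxA inner_adjmx adjS mulmxBl mul1mx -scalemxAl innerBr innerZr.
by rewrite inner_ketbra -[inner _ e]inner_conj norm_conjC.
Qed.

Lemma contraction_le x : inner x (T' *m x) <= inner x (T *m x).
Proof.
rewrite inner_contraction -SST -mulmxA [inner x _]inner_adjmx adjS.
by rewrite gerBl mulr_ge0 ?exprn_ge0 // ler0c ltW.
Qed.

Lemma contraction_pd : pdmx T'.
Proof.
split=> [|x x0].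
  by rewrite !adjmxM adjS adjmxB adjmxZ adjmx1 adjmx_ketbra mulmxA conjC_real.
have Sx0 : S *m x != 0.
  by apply: contraNneq x0 => Sx0; rewrite -(mulKmx S_unitmx x) Sx0 mulmx0.
have := psd_cauchy_schwarz e (S *m x) psdmx1; rewrite !mul1mx e1 mul1r => cs.
rewrite inner_contraction (lt_le_trans _ (lerB (lexx _) (ler_wpM2l _ cs))) ?ler0c ?ltW //.
by rewrite -{1}[inner _ _]mul1r -mulrBl pmulr_rgt0 ?inner_gt0 // -rmorphB ltcR subr_gt0.
Qed.

Lemma contraction_invmx :
  invmx T' = invmx T + (tau / (1 - tau))%:C *: ketbra (invmx S *m e) (invmx S *m e).
Proof.
set k := tau / (1 - tau); set E := ketbra e e.
have EE : E *m E = E by rewrite {1}/E /ketbra mulmxA ketbra_mulmx e1 scale1r.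
have inv_proj : (1%:M - tau%:C *: E) *m (1%:M + k%:C *: E) = 1%:M.
  rewrite mulmxDr mulmx1 mulmxBl mul1mx -!scalemxAl -scalemxAr EE scalerA.
  rewrite -scalerBl -addrA -scaleNr -scalerDl.
  have -> : - tau%:C + (k%:C - tau%:C * k%:C) = (- tau + (k - tau * k))%:C.
    by rewrite -rmorphM -rmorphB -rmorphN -rmorphD.
  have -> : - tau + (k - tau * k) = 0 by rewrite /k; field; rewrite subr_eq0 gt_eqF.
  by rewrite scale0r addr0.
apply: mulmx1_invmx.
have -> : invmx T + k%:C *: ketbra (invmx S *m e) (invmx S *m e) =
          invmx S *m (1%:M + k%:C *: E) *m invmx S.
  rewrite -SST invmxM // /ketbra adjmxM adjmx_inv adjS.
  by rewrite mulmxDr mulmxDl mulmx1 -scalemxAr -scalemxAl !mulmxA.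
by rewrite !mulmxA mulmxK // -(mulmxA S) inv_proj mulmx1 mulmxV.
Qed.

End ContractionStep.

Lemma ler_linear_growth (V : numDomainType) (u : nat -> V) (q : V) :
  (forall n, u n + q <= u n.+1) -> forall n, u 0 + n%:R * q <= u n.
Proof.
move=> uS; elim=> [|n IHn]; first by rewrite mul0r addr0.
by apply: le_trans (uS n); rewrite mulrSr mulrDl mul1r addrA lerD2r.
Qed.

Lemma ler_quadratic_growth (V : numDomainType) (s b : nat -> V) (k q K : V) :
  0 <= k -> k * q = K *+ 2 -> (forall n, s n.+1 - s n = k * b n) ->
  (forall n, b 0 + n%:R * q <= b n) ->
  forall n, s 0 + k * n%:R * b 0 + K * (n * (n - 1))%:R <= s n.
Proof.
move=> k0 kqK sS bn; elim=> [|n IHn]; first by rewrite mulr0 mul0r mul0n mulr0 !addr0.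
have -> : s n.+1 = s n + k * b n by rewrite -sS addrC subrK.
have nS : (n.+1 * (n.+1 - 1) = n * (n - 1) + 2 * n)%N.
  by case: (n) => // m; rewrite !subSS !subn0; ring.
rewrite [leLHS](_ : _ = s 0 + k * n%:R * b 0 + K * (n * (n - 1))%:R + k * (b 0 + n%:R * q)).
  exact: lerD IHn (ler_wpM2l k0 (bn n)).
by rewrite nS mulrDr mulrCA kqK; ring.
Qed.

Lemma quadratic_le_affine (R : realFieldType) (m sigma K x : R) :
  0 <= m -> m <= sigma -> m <= K / 2 -> 1 <= x ->
  m * x ^+ 2 <= sigma + K * (x * (x - 1)).
Proof.
move=> m0 m_sigma m_K x1; have xx1 : 0 <= x * (x - 1) by nra.
have := ler_wpM2r xx1 m_K; have : 0 <= m * (x - 1) ^+ 2 by rewrite mulr_ge0 ?sqr_ge0.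
lra.
Qed.

(* The constant m with s_n >= m n^2 for n >= 1: from s_n >= s_0 + K n (n - 1),
   where K = tau^2 / (2 rho^2 ||T_0||), one can take m = min(s_0, K/2). *)
Definition trace_rate (R : realType) d (tau : R) (T0 : 'M[R[i]]_d) : R :=
  Num.min (complex.Re (\tr (invmx T0))) (tau ^+ 2 / (2 * (1 - tau) ^+ 2 * opnorm T0) / 2).

Section IteratedContraction.
Variables (R : realType) (d : nat).
Local Notation C := R[i].
Local Notation vec := 'cV[C]_d.
Local Notation op := 'M[C]_d.
Local Open Scope complex_scope.
Local Open Scope ring_scope.

Variables (tau : R) (T0 : op) (e : vec).
Hypotheses (tau_gt0 : 0 < tau) (tau_lt1 : tau < 1) (pdT0 : pdmx T0) (e_unit : vnorm e = 1).

Local Notation T := (Tseq tau e T0).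
Local Notation Tmhalf n := (invmx (psd_sqrt (T n))).
Local Notation beta n := (inner e (invmx (T n) *m e)).
Local Notation s n := (\tr (invmx (T n))).
Local Notation k := (tau / (1 - tau)).
Local Notation N := (opnorm T0).

Let e1 : inner e e = 1 := vnorm1 e_unit.

Let d_gt0 : (0 < d)%N.
Proof.
apply: (@cV_neq0_dim_gt0 _ _ e); apply: contra_eqN e1 => /eqP ->.
by rewrite /inner mulmx0 mxE eq_sym oner_eq0.
Qed.

Let N_gt0 : 0 < N := opnorm_pd_gt0 pdT0 e_unit.

Lemma Tseq_pd n : pdmx (T n).
Proof.
elim: n => // n IHn; have [psdS SST] := psd_sqrtP IHn.
exact: contraction_pd psdS SST e1 tau_gt0 tau_lt1.
Qed.

Let sqrtT n := psd_sqrtP (Tseq_pd n).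

Lemma Tseq_invmx n :
  invmx (T n.+1) = invmx (T n) + k%:C *: ketbra (Tmhalf n *m e) (Tmhalf n *m e).
Proof.
by have [psdS SST] := sqrtT n; exact: contraction_invmx (Tseq_pd n) psdS SST e1 tau_lt1.
Qed.

Lemma Tseq_le_T0 n : inner e (T n *m e) <= inner e (T0 *m e).
Proof.
elim: n => // n; apply: le_trans; have [psdS SST] := sqrtT n; rewrite /=.
exact: (contraction_le e psdS SST tau_gt0 e).
Qed.

Lemma Tmhalf_inner_ge n : 1 <= `|inner e (Tmhalf n *m e)| ^+ 2 * N%:C.
Proof.
have [psdS SST] := sqrtT n.
have := psd_inner_invmx_ge1 psdS (psd_sqrt_unitmx (Tseq_pd n)) e1; rewrite SST.
move/le_trans; apply; apply: ler_wpM2l; first exact: exprn_ge0.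
exact: le_trans (Tseq_le_T0 n) (inner_le_opnorm (proj1 pdT0) e_unit).
Qed.

Lemma beta_step n :
  beta n.+1 - beta n = k%:C * `|inner e (Tmhalf n *m e)| ^+ 2.
Proof.
by rewrite Tseq_invmx mulmxDl innerDr addrAC subrr add0r -scalemxAl innerZr inner_ketbra.
Qed.

Lemma trace_step n : s n.+1 - s n = k%:C * beta n.
Proof.
rewrite Tseq_invmx mxtraceD mxtraceZ mxtrace_ketbra addrC addKr.
by rewrite (inner_invmx_psd_sqrt _ (Tseq_pd n)).
Qed.

Lemma beta_lower_bound n : beta 0 + (n%:R * (tau / ((1 - tau) * N)))%:C <= beta n.
Proof.
rewrite rmorphM rmorph_nat; apply: (ler_linear_growth (u := fun n => beta n)) => {}n.
have kE : k = tau / ((1 - tau) * N) * N.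
  by field; rewrite gt_eqF ?N_gt0 // subr_eq0 gt_eqF.
rewrite -lerBrDl beta_step kE [in X in _ <= X]rmorphM -mulrA.
apply: ler_peMr; last by rewrite mulrC Tmhalf_inner_ge.
by rewrite /= ler0c divr_ge0 ?ltW ?mulr_gt0 ?N_gt0 // subr_gt0.
Qed.

Lemma trace_lower_bound n :
  s 0 + (k * n%:R)%:C * beta 0
  + (tau ^+ 2 / (2 * (1 - tau) ^+ 2 * N) * (n * (n - 1))%:R)%:C <= s n.
Proof.
rewrite [(k * _)%:C]rmorphM [(_ * (n * _)%:R)%:C]rmorphM !rmorph_nat.
apply: (ler_quadratic_growth (s := fun n => s n) (b := fun n => beta n)
                              (q := (tau / ((1 - tau) * N))%:C)).
- by rewrite ler0c divr_ge0 ?subr_ge0 ?ltW.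
- rewrite -!rmorphM -rmorphMn; apply: congr1.
  by field; rewrite gt_eqF ?N_gt0 // subr_eq0 gt_eqF.
- exact: trace_step.
- by move=> m; have := beta_lower_bound m; rewrite rmorphM rmorph_nat.
Qed.

Lemma lambda_min_Tseq n : (lambda_min (T n))%:C <= d%:R / s n.
Proof. exact: lambda_min_le_trace_invmx (Tseq_pd n) d_gt0. Qed.

Local Notation m := (trace_rate tau T0).

Lemma trace_rate_gt0 : 0 < m.
Proof.
rewrite lt_min; apply/andP; split.
  by have := trace_pd_invmx_gt0 pdT0 d_gt0; rewrite ltcE => /andP[].
by rewrite !divr_gt0 ?exprn_gt0 ?mulr_gt0 ?exprn_gt0 ?N_gt0 ?subr_gt0.
Qed.

Lemma trace_ge_quadratic n : (1 <= n)%N -> (m * n%:R ^+ 2)%:C <= s n.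
Proof.
move=> n1; apply: le_trans (trace_lower_bound n).
have s0_gt0 := trace_pd_invmx_gt0 pdT0 d_gt0.
have beta0_ge0 : 0 <= beta 0 by rewrite inner_invmx_psd_sqrt ?inner_ge0.
rewrite addrAC; apply: ler_wpDr.
  by rewrite mulr_ge0 // ler0c mulr_ge0 ?ler0n ?divr_ge0 ?subr_ge0 ?ltW.
rewrite -(RRe_real (ger0_real (ltW s0_gt0))) -rmorphD lecR natrM natrB //.
apply: quadratic_le_affine; rewrite ?ge_min ?lexx ?orbT ?ler1n //.
exact: ltW trace_rate_gt0.
Qed.

Lemma dim_div_trace_le n : (1 <= n)%N -> d%:R / s n <= (d%:R / m / n%:R ^+ 2)%:C.
Proof.
move=> n1; have y_gt0 : 0 < (m * n%:R ^+ 2)%:C.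
  by rewrite ltcE /= eqxx mulr_gt0 ?trace_rate_gt0 ?exprn_gt0 ?ltr0n.
have s_ge := trace_ge_quadratic n1.
rewrite -mulrA -invfM fmorph_div rmorph_nat ler_wpM2l ?ler0n // lef_pV2 ?posrE //=.
exact: lt_le_trans s_ge.
Qed.

End IteratedContraction.

Theorem proposition3p4 (R : realType) (d : nat) (tau : R) (T0 : 'M[R[i]]_d) :
  0 < tau < 1 -> pdmx T0 ->
  let rho := 1 - tau in
  (forall e : 'cV[R[i]]_d, vnorm e = 1 ->
    let T := Tseq tau e T0 in
    let Tmhalf n := invmx (psd_sqrt (T n)) in
    let beta n := inner e (invmx (T n) *m e) in
    let s n := \tr (invmx (T n)) in
    (forall n, pdmx (T n)) /\
    (forall n, invmx (T n.+1) =
               invmx (T n) + real_complex R (tau / rho) *: ketbra (Tmhalf n *m e) (Tmhalf n *m e)) /\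
    (forall n, beta n.+1 - beta n = real_complex R (tau / rho) * `|inner e (Tmhalf n *m e)| ^+ 2) /\
    (forall n, s n.+1 - s n = real_complex R (tau / rho) * beta n) /\
    (forall n, beta 0 + real_complex R (n%:R * (tau / (rho * opnorm T0))) <= beta n) /\
    (forall n, s 0 + real_complex R ((tau / rho) * n%:R) * beta 0
                 + real_complex R (tau ^+ 2 / (2 * rho ^+ 2 * opnorm T0) * (n * (n - 1))%:R)
               <= s n))
  /\
  (exists c : R, 0 < c /\
     forall e : 'cV[R[i]]_d, vnorm e = 1 ->
     forall n : nat, (1 <= n)%N ->
       let sn := \tr (invmx (Tseq tau e T0 n)) in
       real_complex R (lambda_min (Tseq tau e T0 n)) <= d%:R / sn /\
       d%:R / sn <= real_complex R (c / n%:R ^+ 2)).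
Proof.
move=> /andP[tau_gt0 tau_lt1] pdT0 rho; split.
  move=> e e_unit T Tmhalf beta s.
  split; first exact: Tseq_pd.
  split; first exact: Tseq_invmx.
  split; first exact: beta_step.
  split; first exact: trace_step.
  split; first exact: beta_lower_bound.
  exact: trace_lower_bound.
exists (Num.max 1 (d%:R / trace_rate tau T0)); split=> [|e e_unit n n1 sn].
  by rewrite lt_max ltr01.
split; first exact: lambda_min_Tseq.
apply: le_trans (dim_div_trace_le tau_gt0 tau_lt1 pdT0 e_unit n1) _.
by rewrite lecR ler_wpM2r ?invr_ge0 ?exprn_ge0 ?ler0n // le_max lexx orbT.
Qed.
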